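(* Let $\succcurlyeq$ be a preference relation on bets over a propositional language $\mathcal{L}$, and let $(\Omega,t,\lambda)$ and $(\Omega',t',\lambda')$ be subjective models of uncertainty representing $\succcurlyeq$ with $t$ sound, $t'$ exact and $\lambda'$ additive. Then for all strategies $s:\mathcal{L}\to\mathbb{R}$, $\int t_\circ(s)\,\mathrm{d}\lambda=\int t'_\bullet(s)\,\mathrm{d}\lambda'$.
   Context: Let $\mathbb{P}$ be a set of propositional variables containing distinguished $\mathbf{T}$, $\mathbf{F}$, and $\mathcal{L}$ the language generated by $\neg,\land,\lor$. A bet is a finitely supported $b:\mathcal{L}\to[0,1]$ summing to $1$. A truth valuation on $\Omega$ is $t:\mathcal{L}\to2^\Omega$ with $t(\mathbf{T})=\Omega,t(\mathbf{F})=\emptyset$; exact: logically equivalent statements have equal images; sound: exact, monotone ($\phi\implies\psi\Rightarrow t(\phi)\subseteq t(\psi)$), symmetric ($t(\neg\phi)=\Omega\setminus t(\phi)$) and $\land$-distributive; for sound $t$, $t(\mathcal{L})$ is a field. A likelihood appraisal on a field $\Sigma$ is $\lambda:\Sigma\to[0,1]$ with $\lambda(\emptyset)=0,\lambda(\Omega)=1$ (not necessarily monotone); additive if finitely additive. A subjective model $(\Omega,t,\lambda)$ represents $\succcurlyeq$ if $b\succcurlyeq b'\iff\sum_\phi b(\phi)\lambda(t(\phi))\ge\sum_\phi b'(\phi)\lambda(t(\phi))$. For a likelihood appraisal $\lambda$ and measurable $x:\Omega\to\mathbb{R}$, $\int x\,\mathrm{d}\lambda=\int_{-\infty}^{\infty}\lambda(\{\omega: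 x(\omega)\ge r\})\,\mathrm{d}r$ (Lebesgue integral over $\mathbb{R}$; for $x$ of finite range this is a finite sum). A strategy is a finitely supported $s:\mathcal{L}\to\mathbb{R}$; $t_\circ(s)=\sum_{\phi}s(\phi)\mathbf{1}_{t(\phi)}$. For $t(\mathcal{L})$-measurable $x$ with finite image $\{\alpha_1>\dots>\alpha_n\}$, $\alpha_{n+1}=0$, choosing $\phi_k$ with $t(\phi_k)=x^{-1}(\{\alpha_1,\dots,\alpha_k\})$, define $\xi^t_{t'}(x)=[\sum_{k=1}^n(\alpha_k-\alpha_{k+1})\mathbf{1}_{t'(\phi_k)}]$, the $\lambda'$-a.e. equivalence class. Then $t'_\bullet(s)=\xi^t_{t'}(t_\circ(s))$; this class does not depend on the choice of the sound representation $(\Omega,t,\lambda)$, and its integral against the additive $\lambda'$ is well defined. *)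

From HB Require Import structures.
From mathcomp Require Import all_boot all_order all_algebra.
From mathcomp Require Import mathcomp_extra boolp classical_sets functions
  cardinality fsbigop reals numfun.
Set Implicit Arguments. Unset Strict Implicit. Unset Printing Implicit Defensive.
Import Order.TTheory GRing.Theory Num.Theory.
Local Open Scope classical_set_scope.
Local Open Scope ring_scope.

Inductive lform (P : Type) : Type :=
  | Var of P
  | Neg of lform P
  | And of lform P & lform P
  | Or of lform P & lform P.

HB.instance Definition _ (P : Type) := gen_eqMixin (lform P).
HB.instance Definition _ (P : Type) := gen_choiceMixin (lform P).

Section Logic.
Variables (P : Type) (vT vF : P).

(* classical semantics; the distinguished variables T and F denote truth
   and falsity *)
Fixpoint feval (v : P -> bool) (phi : lform P) : bool :=
  match phi with
  | Var p => v p
  | Neg a => ~~ feval v a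
  | And a b => feval v a && feval v b
  | Or a b => feval v a || feval v b
  end.

Definition admissible (v : P -> bool) := v vT = true /\ v vF = false.

Definition implies (phi psi : lform P) :=
  forall v, admissible v -> feval v phi -> feval v psi.

Definition lequiv (phi psi : lform P) := implies phi psi /\ implies psi phi.

Variable Omega : Type.

Definition truth_valuation (t : lform P -> set Omega) :=
  t (Var vT) = setT /\ t (Var vF) = set0.

Definition exact (t : lform P -> set Omega) :=
  truth_valuation t /\ forall phi psi, lequiv phi psi -> t phi = t psi.

Definition sound (t : lform P -> set Omega) :=
  [/\ exact t,
      (forall phi psi, implies phi psi -> t phi `<=` t psi),
      (forall phi, t (Neg phi) = ~` t phi) &
      (forall phi psi, t (And phi psi) = t phi `&` t psi)].
End Logic.

Section Appraisal.
Variables (Omega : Type) (R : realType).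

Definition is_field (S : set (set Omega)) :=
  [/\ S set0,
      (forall A, S A -> S (~` A)) &
      (forall A B, S A -> S B -> S (A `|` B))].

(* likelihood appraisal on the field S (not necessarily monotone);
   lam is a total function whose values outside S are irrelevant *)
Definition likelihood_appraisal (S : set (set Omega)) (lam : set Omega -> R) :=
  [/\ forall A, S A -> 0 <= lam A <= 1, lam set0 = 0 & lam setT = 1].

Definition additive (S : set (set Omega)) (lam : set Omega -> R) :=
  forall A B, S A -> S B -> A `&` B = set0 -> lam (A `|` B) = lam A + lam B.

Definition subjective_model (P : Type) (vT vF : P) (t : lform P -> set Omega)
    (S : set (set Omega)) (lam : set Omega -> R) :=
  [/\ truth_valuation vT vF t, is_field S, (forall phi, S (t phi)) &
      likelihood_appraisal S lam].

Definition is_bet (P : Type) (b : lform P -> R) :=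
  [/\ finite_set [set phi | b phi != 0],
      (forall phi, 0 <= b phi <= 1) &
      (\sum_(phi \in [set: lform P]) b phi = 1)].

Definition bet_value (P : Type) (t : lform P -> set Omega) (lam : set Omega -> R)
    (b : lform P -> R) : R :=
  \sum_(phi \in [set: lform P]) b phi * lam (t phi).

Definition represents (P : Type) (pref : (lform P -> R) -> (lform P -> R) -> Prop)
    (t : lform P -> set Omega) (lam : set Omega -> R) :=
  forall b b', is_bet b -> is_bet b' ->
    (pref b b' <-> bet_value t lam b' <= bet_value t lam b).

Definition is_strategy (P : Type) (s : lform P -> R) :=
  finite_set [set phi | s phi != 0].

Definition t_circ (P : Type) (t : lform P -> set Omega) (s : lform P -> R)
    : Omega -> R :=
  fun w => \sum_(phi \in [set: lform P]) s phi * \1_(t phi) w.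

Definition dvals (x : Omega -> R) : seq R := sort >=%R (finmap.enum_fset (fset_set (range x))).

(* Choquet-type integral of a finite-range x against a likelihood appraisal:
   sum_{k=1}^n (alpha_k - alpha_{k+1}) lam(x^{-1}{alpha_1,...,alpha_k}),
   alpha_{n+1} = 0 (nth default 0). *)
Definition integral (lam : set Omega -> R) (x : Omega -> R) : R :=
  let vs := dvals x in
  \sum_(k < size vs)
     (vs`_k - vs`_k.+1) * lam [set w | x w \in take k.+1 vs].
End Appraisal.

Section Xi.
Variables (P : Type) (Omega Omega' : Type) (R : realType).

Definition xi_choice (t : lform P -> set Omega) (x : Omega -> R)
    (phi : nat -> lform P) :=
  forall k, (k < size (dvals x))%N ->
    t (phi k) = [set w | x w \in take k.+1 (dvals x)].

(* a representative of xi^t_{t'}(x) *)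
Definition xi (t' : lform P -> set Omega') (x : Omega -> R)
    (phi : nat -> lform P) : Omega' -> R :=
  fun w => let vs := dvals x in
    \sum_(k < size vs) (vs`_k - vs`_k.+1) * \1_(t' (phi k)) w.
End Xi.

(* Two subjective models representing the same preference give every
   statement the same likelihood, lam (t phi) = lam' (t' phi): comparing the
   bet on phi with the bets p T + (1 - p) F, whose value is p in any model,
   pins lam (t phi) down as a cut of [0, 1].  Hence the Choquet sum for
   t_circ(s) agrees term by term with sum_k c_k lam' (t' phi_k), where
   xi = sum_k c_k 1_(t' phi_k).  Finally, for an additive lam' the Choquet
   integral of a finite combination sum_k c_k 1_(A_k) is sum_k c_k lam' (A_k):
   both sides split over the atoms of the partition generated by the A_k,
   and on each atom the layer differences telescope to the value taken there. *)

From Pilot Require Import Defs.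
From HB Require Import structures.
From mathcomp Require Import all_boot all_order all_algebra.
From mathcomp Require Import mathcomp_extra boolp classical_sets functions
  cardinality fsbigop reals numfun.
Set Implicit Arguments. Unset Strict Implicit. Unset Printing Implicit Defensive.
Import Order.TTheory.
Local Open Scope classical_set_scope.
Local Open Scope ring_scope.

(* GRing.Theory is imported only inside sections: it exports a lemma named
   [additive] that would otherwise shadow [Defs.additive] in proposition9. *)
Section Telescope.
Import GRing.Theory Num.Theory.
Variable R : numDomainType.

Lemma telescope_nth0 (b : seq R) : \sum_(j < size b) (b`_j - b`_j.+1) = b`_0.
Proof.
elim: b => [|a b IH]; first by rewrite big_ord0.
by rewrite big_ord_recl IH nth0 subrK.
Qed.

Lemma telescope_take_mem (b : seq R) v : uniq b -> v \in b ->
  \sum_(j < size b) (b`_j - b`_j.+1) * (v \in take j.+1 b)%:R = v.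
Proof.
elim: b => // a b IH /= /andP[anb ub]; rewrite in_cons => /orP[/eqP->|vb].
  under eq_bigr => j _ do rewrite /= in_cons eqxx mulr1.
  exact: (telescope_nth0 (a :: b)).
have va : (v == a) = false by apply: contraNF anb => /eqP <-.
rewrite big_ord_recl take0 mem_seq1 va mulr0 add0r -{2}(IH ub vb).
by apply: eq_bigr => j _; rewrite /= in_cons va.
Qed.
End Telescope.

Section FiniteFieldIntegral.
Import GRing.Theory Num.Theory.
Variables (R : realType) (Omega : Type).
Variables (S : set (set Omega)) (lam : set Omega -> R).
Hypotheses (fieldS : is_field S) (addl : Defs.additive S lam).
Hypothesis lam0 : lam set0 = 0.

Lemma field_setT : S setT.
Proof. by case: fieldS => S0 SC _; rewrite -setC0; apply: SC. Qed.

Lemma field_setI A B : S A -> S B -> S (A `&` B).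
Proof.
case: fieldS => _ SC SU SA SB; rewrite -[A `&` B]setCK setCI.
by apply/SC/SU; apply: SC.
Qed.

Section FiniteFactorization.
Variables (T : finType) (E : Omega -> T).
Hypothesis fiberS : forall e, S (E @^-1` [set e]).

Lemma additive_preimage (p : pred T) :
  lam (E @^-1` [set e | p e]) = \sum_(e | p e) lam (E @^-1` [set e]).
Proof.
have fsum_fibers (s : seq T) : uniq s ->
    S [set w | E w \in s] /\
    lam [set w | E w \in s] = \sum_(e <- s) lam (E @^-1` [set e]).
  elim: s => [_|e s IH /= /andP[es /IH[Ss lams]]].
    have -> : [set w | E w \in [::]] = set0 by apply/seteqP; split.
    by rewrite big_nil; case: fieldS.
  have -> : [set w | E w \in e :: s] = E @^-1` [set e] `|` [set w | E w \in s].
    apply/seteqP; split => w /=; rewrite in_cons.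
      by case/orP => [/eqP|]; [left|right].
    by case=> [->|->]; rewrite ?eqxx ?orbT.
  case: fieldS => _ _ SU; split; first exact: SU.
  rewrite addl ?big_cons ?lams //; apply/seteqP; split => w //= [-> ews].
  by rewrite ews in es.
rewrite -big_filter.
have [_ <-] := fsum_fibers _ (filter_uniq p (index_enum_uniq T)).
by congr lam; apply/seteqP; split => w /=; rewrite mem_filter mem_index_enum andbT.
Qed.

Lemma integral_comp_finite (f : T -> R) :
  integral lam (f \o E) = \sum_e f e * lam (E @^-1` [set e]).
Proof.
rewrite /integral /=; set b := dvals (f \o E).
have fin_range : finite_set (range (f \o E)).
  apply: (sub_finite_set _ (finite_image f (@finite_finset _ setT))).
  by move=> _ [w _ <-]; exists (E w).
have ub : uniq b by rewrite sort_uniq finmap.fset_uniq.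
have memb w : f (E w) \in b.
  by rewrite mem_sort in_fset_set // inE; exists w.
under eq_bigr => j _.
  rewrite [lam _](additive_preimage (fun e => f e \in take j.+1 b)).
  rewrite big_mkcond mulr_sumr.
over.
rewrite exchange_big /=; apply: eq_bigr => e _.
transitivity ((\sum_(j < size b) (b`_j - b`_j.+1) * (f e \in take j.+1 b)%:R)
               * lam (E @^-1` [set e])).
  rewrite mulr_suml; apply: eq_bigr => j _.
  by case: (_ \in _); rewrite ?mulr1 ?mulr0 ?mul0r.
have [[w Ew]|empty] := pselect (exists w, E w = e).
  by rewrite telescope_take_mem // -Ew memb.
have -> : E @^-1` [set e] = set0.
  by apply/seteqP; split => w //= Ew; apply: empty; exists w.
by rewrite lam0 !mulr0.
Qed.
End FiniteFactorization.

Section Signature.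
Variables (n : nat) (A : 'I_n -> set Omega).
Hypothesis AS : forall k, S (A k).

Definition signature (w : Omega) : {ffun 'I_n -> bool} := [ffun k => w \in A k].

Lemma field_signature_fiber e : S (signature @^-1` [set e]).
Proof.
have -> : signature @^-1` [set e] =
    \big[setI/setT]_(k <- enum 'I_n) (if e k then A k else ~` A k).
  rewrite -bigcap_seq; apply/seteqP; split => w /=.
    move=> <- k _; rewrite ffunE.
    by case: (boolP (w \in A k)) => [/set_mem | /negP wA /mem_set].
  move=> h; apply/ffunP => k; rewrite ffunE.
  have := h k; rewrite /= mem_enum => /(_ isT).
  by case: (e k) => [/mem_set | nA]; last apply/negbTE/negP => /set_mem.
elim/big_ind: _ => //; [exact: field_setT|exact: field_setI|].
by move=> k _; case: (e k); [|case: fieldS => _ SC _; apply: SC].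
Qed.

Lemma integral_lincomb_indic (c : 'I_n -> R) :
  integral lam (fun w => \sum_(k < n) c k * \1_(A k) w) =
  \sum_(k < n) c k * lam (A k).
Proof.
pose f (e : {ffun 'I_n -> bool}) := \sum_(k < n) c k * (e k)%:R.
have -> : (fun w => \sum_(k < n) c k * \1_(A k) w) = f \o signature.
  by apply/funext => w; apply: eq_bigr => k _; rewrite ffunE indicE.
rewrite integral_comp_finite; last exact: field_signature_fiber.
under [RHS]eq_bigr => k _.
  have -> : A k = signature @^-1` [set e : {ffun _ -> bool} | e k].
    by apply/seteqP; split => w /=; rewrite ffunE; [apply: mem_set|apply: set_mem].
  rewrite additive_preimage; last exact: field_signature_fiber.
  rewrite big_mkcond mulr_sumr.
over.
rewrite exchange_big; apply: eq_bigr => e _; rewrite mulr_suml.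
by apply: eq_bigr => k _; case: (e k); rewrite ?mulr1 ?mulr0 ?mul0r.
Qed.
End Signature.
End FiniteFieldIntegral.

Section FiniteSupportSums.
Import GRing.Theory Num.Theory.
Variables (R : realType) (T : choiceType).

Lemma fsbig_setT_single (a : T) (F : T -> R) : (forall x, x != a -> F x = 0) ->
  \sum_(x \in [set: T]) F x = F a.
Proof.
move=> Fa; rewrite -(fsbig_widen [set a]) ?fsbig_set1 //.
by move=> x [_ /eqP]; apply: Fa.
Qed.

Lemma fsbig_setT_pair (a c : T) (F : T -> R) : a != c ->
  (forall x, x != a -> x != c -> F x = 0) ->
  \sum_(x \in [set: T]) F x = F a + F c.
Proof.
move=> ac Fac; rewrite -(fsbig_widen [set a; c]) //.
  rewrite fsbigU0 ?fsbig_set1 //; try exact: finite_set1.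
  by move=> x [/= -> xc]; move/eqP: ac.
by move=> x [_ /= /not_orP[/eqP xa /eqP xc]]; apply: Fac.
Qed.
End FiniteSupportSums.

Section ReferenceBets.
Import GRing.Theory Num.Theory.
Variables (R : realType) (P : Type) (vT vF : P).

Definition point_bet (f : lform P) : lform P -> R := fun x => (x == f)%:R.

Definition reference_bet (p : R) : lform P -> R :=
  fun x => if x == Var vT then p else if x == Var vF then 1 - p else 0.

Lemma is_bet_point f : is_bet (point_bet f).
Proof.
split.
- apply: (sub_finite_set _ (finite_set1 f)) => x /=.
  by rewrite /point_bet; case: (eqVneq x f) => [->|] //; rewrite eqxx.
- by move=> x; rewrite /point_bet; case: eqP; rewrite ?ler01 ?lexx.
- rewrite (@fsbig_setT_single _ _ f) /point_bet ?eqxx // => x /negbTE xf.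
  by rewrite /point_bet xf.
Qed.

Lemma is_bet_reference p :
  Var vT != Var vF -> 0 <= p <= 1 -> is_bet (reference_bet p).
Proof.
move=> TF /andP[p0 p1]; split.
- apply: (sub_finite_set _ (finite_set2 (Var vT) (Var vF))) => x /=.
  rewrite /reference_bet; have [->|_] := eqVneq x (Var vT); first by left.
  by have [->|_] := eqVneq x (Var vF); [right|rewrite eqxx].
- move=> x; rewrite /reference_bet; case: eqP => _; first by rewrite p0 p1.
  by case: eqP => _; rewrite ?lexx ?ler01 // subr_ge0 p1 gerBl p0.
- rewrite (@fsbig_setT_pair _ _ (Var vT) (Var vF)) //.
    by rewrite /reference_bet eqxx eq_sym (negbTE TF) eqxx addrC subrK.
  by move=> x /negbTE xT /negbTE xF; rewrite /reference_bet xT xF.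
Qed.

Lemma bet_value_point (Omega : Type) (t : lform P -> set Omega)
    (lam : set Omega -> R) f :
  bet_value t lam (point_bet f) = lam (t f).
Proof.
rewrite /bet_value (@fsbig_setT_single _ _ f) /point_bet ?eqxx ?mul1r // => x.
by rewrite /point_bet => /negbTE ->; rewrite mul0r.
Qed.

Lemma bet_value_reference (Omega : Type) (t : lform P -> set Omega)
    (lam : set Omega -> R) p :
  Var vT != Var vF -> truth_valuation vT vF t -> lam setT = 1 -> lam set0 = 0 ->
  bet_value t lam (reference_bet p) = p.
Proof.
move=> TF [tT tF] lamT lam0.
rewrite /bet_value (@fsbig_setT_pair _ _ (Var vT) (Var vF)) //.
  rewrite /reference_bet eqxx eq_sym (negbTE TF) eqxx tT tF lamT lam0.
  by rewrite mulr1 mulr0 addr0.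
by move=> x /negbTE xT /negbTE xF; rewrite /reference_bet xT xF mul0r.
Qed.

Lemma subjective_model_TF_neq (Omega : Type) (t : lform P -> set Omega) S
    (lam : set Omega -> R) :
  subjective_model vT vF t S lam -> Var vT != Var vF.
Proof.
case=> [[tT tF] _ _ [_ lam0 lamT]]; apply/eqP => TF.
by move: lamT; rewrite -tT TF tF lam0 => /eqP; rewrite eq_sym oner_eq0.
Qed.

Lemma represents_likelihood_eq (pref : (lform P -> R) -> (lform P -> R) -> Prop)
    (Omega : Type) (t : lform P -> set Omega) S lam
    (Omega' : Type) (t' : lform P -> set Omega') S' lam' :
  subjective_model vT vF t S lam -> subjective_model vT vF t' S' lam' ->
  represents pref t lam -> represents pref t' lam' ->
  forall f, lam (t f) = lam' (t' f).
Proof.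
move=> M M' rep rep' f; have TF := subjective_model_TF_neq M.
have [tv _ St [lam01 lam0 lamT]] := M; have [tv' _ St' [lam01' lam0' lamT']] := M'.
have cut_eq p : 0 <= p <= 1 -> (p <= lam (t f)) <-> (p <= lam' (t' f)).
  move=> p01.
  have iff := rep _ _ (is_bet_point f) (is_bet_reference TF p01).
  have iff' := rep' _ _ (is_bet_point f) (is_bet_reference TF p01).
  rewrite bet_value_point bet_value_reference // in iff.
  rewrite bet_value_point bet_value_reference // in iff'.
  exact: iff_trans (iff_sym iff) iff'.
apply/eqP; rewrite eq_le; apply/andP; split.
  exact/(cut_eq _ (lam01 _ (St f))).
exact/(cut_eq _ (lam01' _ (St' f))).
Qed.
End ReferenceBets.

Theorem proposition9 (R : realType) (P : Type) (vT vF : P)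
    (pref : (lform P -> R) -> (lform P -> R) -> Prop)
    (Omega : Type) (t : lform P -> set Omega) (S : set (set Omega))
    (lam : set Omega -> R)
    (Omega' : Type) (t' : lform P -> set Omega') (S' : set (set Omega'))
    (lam' : set Omega' -> R) :
  subjective_model vT vF t S lam ->
  subjective_model vT vF t' S' lam' ->
  represents pref t lam ->
  represents pref t' lam' ->
  sound vT vF t -> exact vT vF t' -> additive S' lam' ->
  forall s : lform P -> R, is_strategy s ->
  forall phi : nat -> lform P, xi_choice t (t_circ t s) phi ->
    integral lam (t_circ t s) = integral lam' (xi t' (t_circ t s) phi).
Proof.
(* Soundness of t, exactness of t' and the finite support of s only serve to
   make the choice phi and the class of xi well defined; here phi is given. *)
move=> M M' rep rep' _ _ addl' s _ phi phiE.
have [_ fieldS' St' [_ lam0' _]] := M'.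
rewrite /xi (integral_lincomb_indic fieldS' addl' lam0' (fun k => St' (phi k))).
apply: eq_bigr => k _.
by rewrite -(phiE k (ltn_ord k)) (represents_likelihood_eq M M' rep rep').
Qed.
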